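(* Consider CMS-CU with $d$ rows and $w$ counters per row, fed with an IRM request stream, as described in the context. For every item $i\in I$ there exists a constant $B_i\ge 0$ such that for every $t\ge 1$, $$\mathbb{E}\!\left[\frac{e_i(t)}{t}\right]\le \frac{1}{w}\sum_{j\in I\setminus\{i\}}p_j\,\gamma_{i,j}+\frac{B_i}{t},$$ where $$\gamma_{i,j}=\begin{cases}1,& j\le i,\\ \min\big(\mathcal{A}(p_i-p_j)^{d-1},\,1\big),& j>i,\end{cases}$$ with $\mathcal{A}(x)=\min_{k=0,\dots,w-1}\left(\frac{\sum_{l>k}p_l}{(w-k)x}+\frac{k}{w}\right)$ for $x>0$ and $\mathcal{A}(0)=1$.
   Context: Items form the universe $I=\{1,\dots,N\}$. Requests follow the Independent Reference Model (IRM): the stream is $Z(1),Z(2),\dots$ with $Z(s)$ i.i.d. categorical random variables, $\Pr(Z(s)=i)=p_i$, $\sum_{i\in I}p_i=1$, and items are numbered so that $p_1\ge p_2\ge\dots\ge p_N$. The sketch is a $d\times w$ array of counters, initially $0$. Hash functions $h_1,\dots,h_d:I\to\{1,\dots,w\}$ are chosen independently and uniformly at random from a family of pairwise independent hash functions (so $\Pr(h_r(i)=h_r(j))=1/w$ for $i\ne j$), independently of the request stream, and are fixed during processing. $c_i^r(t)$ denotes the value at time $t$ of the counter in row $r$, column $h_r(i)$. CMS-CU update: when item $i$ is requested at time $t$, $c_i^r(t)=\max\big(c_i^r(t-1),\ \min_{f\in[d]}c_i^f(t-1)+1\big)$ for all $r\in[d]$ (other counters unchanged). $n_i(t)$ is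 the number of occurrences of item $i$ among $Z(1),\dots,Z(t)$; the estimate is $\hat n_i(t)=\min_{r\in[d]}c_i^r(t)$ and the estimation error is $e_i(t)=\hat n_i(t)-n_i(t)$. Expectations are taken over both the random choice of hash functions and the request process. *)

From HB Require Import structures.
From mathcomp Require Import all_boot all_order all_algebra.
From mathcomp Require Import reals.
Set Implicit Arguments. Unset Strict Implicit. Unset Printing Implicit Defensive.
Import Order.TTheory GRing.Theory Num.Theory.
Local Open Scope ring_scope.

(* Items are 'I_N (item k here = item k+1 in the paper); rows 'I_d; columns 'I_w. *)

(* minimum of d naturals (d >= 1); the max is only used as a neutral start value *)
Definition rowmax (d : nat) (f : 'I_d -> nat) : nat :=
  (\max_(r < d) f r)%N.
Definition rowmin (d : nat) (f : 'I_d -> nat) : nat :=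
  (\big[minn/rowmax f]_(r < d) f r)%N.

Definition cu_update (N d w : nat) (hs : 'I_d -> 'I_N -> 'I_w)
    (c : 'I_d -> 'I_w -> nat) (i : 'I_N) : 'I_d -> 'I_w -> nat :=
  let m := rowmin (fun f => c f (hs f i)) in
  fun r k => if k == hs r i then maxn (c r k) m.+1 else c r k.

Definition cu_counters (N d w : nat) (hs : 'I_d -> 'I_N -> 'I_w)
    (s : seq 'I_N) : 'I_d -> 'I_w -> nat :=
  foldl (cu_update hs) (fun _ _ => 0%N) s.

Definition cu_estimate (N d w : nat) (hs : 'I_d -> 'I_N -> 'I_w)
    (s : seq 'I_N) (i : 'I_N) : nat :=
  rowmin (fun r => cu_counters hs s r (hs r i)).

Definition cu_error (R : realType) (N d w : nat) (hs : 'I_d -> 'I_N -> 'I_w)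
    (s : seq 'I_N) (i : 'I_N) : R :=
  (cu_estimate hs s i)%:R - (count_mem i s)%:R.

Definition stream_prob (R : realType) (N : nat) (p : 'I_N -> R) (s : seq 'I_N) : R :=
  \prod_(x <- s) p x.

(* Pairwise independent hash family: uniform distribution on the finite index
   type H (repetitions allowed through hash), with
   Pr(h(i)=a, h(j)=b) = 1/w^2 for all i <> j and all a, b. *)
Definition pairwise_indep (R : realType) (N w : nat) (H : finType)
    (hash : H -> 'I_N -> 'I_w) : Prop :=
  forall i j : 'I_N, i != j -> forall a b : 'I_w,
    (#|[pred h : H | (hash h i == a) && (hash h j == b)]|%:R / #|H|%:R : R)
      = 1 / (w ^ 2)%:R.

(* E[e_i(t)/t]: the d hash functions are drawn independently and uniformly
   from the family, the stream Z(1..t) is IRM with popularities p. *)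
Definition expected_rel_err (R : realType) (N d w : nat) (H : finType)
    (hash : H -> 'I_N -> 'I_w) (p : 'I_N -> R) (i : 'I_N) (t : nat) : R :=
  (#|H| ^ d)%:R^-1 *
  \sum_(hs : {ffun 'I_d -> H}) \sum_(s : t.-tuple 'I_N)
     stream_prob p s * (cu_error R (fun r => hash (hs r)) s i / t%:R).

Definition A_term (R : realType) (N w : nat) (p : 'I_N -> R) (x : R) (k : nat) : R :=
  (\sum_(l : 'I_N | (k <= l)%N) p l) / ((w - k)%:R * x) + k%:R / w%:R.

Definition Acal (R : realType) (N w : nat) (p : 'I_N -> R) (x : R) : R :=
  if 0 < x then \big[Num.min/A_term w p x 0]_(k < w) A_term w p x k else 1.

Definition gamma (R : realType) (N d w : nat) (p : 'I_N -> R) (i j : 'I_N) : R :=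
  if (j <= i)%N then 1 else Num.min ((Acal w p (p i - p j)) ^+ (d - 1)) 1.

(* A request for [i] raises the error of [i] by nothing; a request for [z != i]
   raises it by at most one, and only if [z] collides with [i] in the row
   realising the minimum and every bucket of [z] has already received at least
   [n_i] requests.  With independent rows this has probability at most
   [1/w * P(a bucket of z covers i)^(d-1)].  A bucket covers [i] either because
   its mass is at least [p_i], which by a union bound over the [k] most popular
   items and Markov's inequality on the others has probability at most
   [A(p_i - p_z)], or although its mass is below [p_i]; by a Chernoff bound the
   latter probability decays geometrically with the number of requests, so over
   the whole stream it contributes only a constant, the [B_i / t] term. *)

From HB Require Import structures.
From mathcomp Require Import all_boot all_order all_algebra.
From mathcomp Require Import reals.
From mathcomp Require Import ring lra.
Import Order.TTheory GRing.Theory Num.Theory.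
Set Implicit Arguments. Unset Strict Implicit. Unset Printing Implicit Defensive.

Lemma rowmin_le d (f : 'I_d -> nat) r : (rowmin f <= f r)%N.
Proof.
rewrite /rowmin; elim: (index_enum _) (mem_index_enum r) => // a s IH.
rewrite inE big_cons => /orP [/eqP <-|/IH]; first exact: geq_minl.
exact: leq_trans (geq_minr _ _).
Qed.

Lemma rowmin_ge d (f : 'I_d -> nat) n :
  (0 < d)%N -> (forall r, n <= f r)%N -> (n <= rowmin f)%N.
Proof.
move=> d_gt0 le_n_f; apply: (big_ind (fun m => n <= m)%N) => //.
- exact: leq_trans (le_n_f (Ordinal d_gt0)) (leq_bigmax _).
- by move=> x y nx ny; rewrite leq_min nx ny.
Qed.

Section CountMinCU.

Variables (N d w : nat) (hs : 'I_d -> 'I_N -> 'I_w).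
Hypothesis d_gt0 : (0 < d)%N.

Definition bucket_covers (f : 'I_N -> 'I_w) (u : seq 'I_N) (i z : 'I_N) : bool :=
  (count_mem i u <= count (fun y => f y == f z) u)%N.

Lemma cu_counters_rcons u z :
  cu_counters hs (rcons u z) = cu_update hs (cu_counters hs u) z.
Proof. by rewrite /cu_counters foldl_rcons. Qed.

Lemma count_mem_le_cu_counters i u r :
  (count_mem i u <= cu_counters hs u r (hs r i))%N.
Proof.
elim/last_ind: u r => [//|u z IH] r.
rewrite cu_counters_rcons /cu_update -cats1 count_cat /= addn0.
have [->|_] := eqVneq z i; last first.
  by rewrite addn0; case: ifP => _ //; exact: leq_trans (IH r) (leq_maxl _ _).
rewrite eqxx addn1; apply: leq_trans (leq_maxr _ _).
by rewrite ltnS; apply: rowmin_ge => // f; exact: IH.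
Qed.

Lemma cu_counters_le_count u r b :
  (cu_counters hs u r b <= count (fun y => hs r y == b) u)%N.
Proof.
elim/last_ind: u r b => [//|u z IH] r b.
rewrite cu_counters_rcons /cu_update -cats1 count_cat /= addn0.
case: ifP => [/eqP b_z|_]; last exact: leq_trans (IH r b) (leq_addr _ _).
rewrite {3}b_z eqxx addn1 geq_max (leq_trans (IH r b)) //= ltnS.
by apply: leq_trans (rowmin_le _ r) _; rewrite -b_z; exact: IH.
Qed.

Definition cu_bad_step r0 i u z : bool :=
  [&& z != i, hs r0 z == hs r0 i & [forall r, bucket_covers (hs r) u i z]].

(* A request for [z != i] can raise the counter of [i] in row [r0] only if [z]
   collides with [i] in that row and the minimum over the rows of the counters
   of [z] reaches the counter of [i]; the latter forces every bucket of [z]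
   to cover the requests for [i]. *)
Lemma cu_counter_step i r0 u z :
  (cu_counters hs (rcons u z) r0 (hs r0 i) <=
     cu_counters hs u r0 (hs r0 i) + (z == i) + cu_bad_step r0 i u z)%N.
Proof.
rewrite /cu_bad_step cu_counters_rcons /cu_update; set c := cu_counters hs u.
set m := rowmin _; rewrite eq_sym.
case: eqP => [coll|_]; last by rewrite -addnA leq_addr.
have le_m_c : (m <= c r0 (hs r0 i))%N by rewrite -coll; exact: rowmin_le.
have [->|ne_zi] /= := eqVneq z i.
  by rewrite addn1 addn0 geq_max leqnSn ltnS.
case: (ltnP m (c r0 (hs r0 i))) => [lt_m_c|le_c_m].
  by rewrite addn0 (maxn_idPl lt_m_c) leq_addr.
have -> : [forall r, bucket_covers (hs r) u i z].
  apply/forallP => r; apply: leq_trans (count_mem_le_cu_counters i u r0) _.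
  apply: leq_trans le_c_m (leq_trans (rowmin_le _ r) _).
  exact: cu_counters_le_count.
by rewrite addn0 addn1 geq_max leqnSn ltnS.
Qed.

End CountMinCU.

Local Open Scope ring_scope.

Fixpoint step_sum (T : Type) (V : nmodType) (f : seq T -> T -> V) (pre s : seq T) : V :=
  if s is z :: s' then f pre z + step_sum f (rcons pre z) s' else 0.

Section CountMinCUError.

Variables (R : realType) (N d w : nat) (hs : 'I_d -> 'I_N -> 'I_w).
Hypothesis d_gt0 : (0 < d)%N.
Variables (r0 : 'I_d) (i : 'I_N).

Definition cu_bad_steps (pre s : seq 'I_N) : R :=
  step_sum (fun u z => (cu_bad_step hs r0 i u z)%:R) pre s.

Lemma cu_counters_cat_le pre s :
  ((cu_counters hs (pre ++ s) r0 (hs r0 i))%:R : R) <=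
    (cu_counters hs pre r0 (hs r0 i))%:R + (count_mem i s)%:R + cu_bad_steps pre s.
Proof.
elim: s pre => [|z s IH] pre /=; first by rewrite cats0 !addr0.
rewrite -cat_rcons; apply: le_trans (IH _) _; rewrite /cu_bad_steps /=.
have := cu_counter_step hs d_gt0 i r0 pre z; rewrite -(ler_nat R) !natrD.
lra.
Qed.

Lemma cu_error_le_bad_steps s : cu_error R hs s i <= cu_bad_steps [::] s.
Proof.
have := cu_counters_cat_le [::] s; rewrite cat0s add0r.
have : (cu_estimate hs s i <= cu_counters hs s r0 (hs r0 i))%N by exact: rowmin_le.
rewrite /cu_error -(ler_nat R); lra.
Qed.

End CountMinCUError.

Section StreamSums.

Variables (R : realType) (N : nat) (p : 'I_N -> R).
Hypothesis p_ge0 : forall j, 0 <= p j.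
Hypothesis p_sum1 : \sum_(j < N) p j = 1.

Lemma sum_tuple0 (V : nmodType) (T : finType) (F : 0.-tuple T -> V) :
  \sum_(u : 0.-tuple T) F u = F [tuple].
Proof.
rewrite (eq_bigr (fun _ => F [tuple])) => [|u _]; last by rewrite tuple0.
by rewrite sumr_const card_tuple.
Qed.

Lemma sum_tuple_cons (V : nmodType) (T : finType) n (F : n.+1.-tuple T -> V) :
  \sum_(u : n.+1.-tuple T) F u =
  \sum_(x : T) \sum_(u : n.-tuple T) F [tuple of x :: u].
Proof.
rewrite pair_big (reindex (fun xu : T * n.-tuple T => [tuple of xu.1 :: xu.2])) /=.
  by apply: eq_bigr => -[x u].
exists (fun u : n.+1.-tuple T => (thead u, [tuple of behead u])).
  by move=> [x u] _; congr pair; apply: val_inj.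
by move=> u _; rewrite [in RHS](tuple_eta u).
Qed.

Lemma sum_tuple_prod (T : finType) n (F : T -> R) :
  \sum_(u : n.-tuple T) \prod_(x <- u) F x = (\sum_x F x) ^+ n.
Proof.
elim: n => [|n IH]; first by rewrite sum_tuple0 big_nil.
rewrite sum_tuple_cons exprS -IH mulr_suml; apply: eq_bigr => x _.
by rewrite mulr_sumr; apply: eq_bigr => u _; rewrite big_cons.
Qed.

Lemma stream_prob_ge0 u : 0 <= stream_prob p u.
Proof. exact: prodr_ge0. Qed.

Lemma stream_prob_cons x u : stream_prob p (x :: u) = p x * stream_prob p u.
Proof. exact: big_cons. Qed.

Lemma sum_stream_prob n : \sum_(u : n.-tuple 'I_N) stream_prob p u = 1.
Proof. by rewrite sum_tuple_prod p_sum1 expr1n. Qed.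

(* The request at step [k] is independent of the [k] previous ones. *)
Lemma expect_step_sum (f : seq 'I_N -> 'I_N -> R) t pre :
  \sum_(s : t.-tuple 'I_N) stream_prob p s * step_sum f pre s =
  \sum_(k < t) \sum_(u : k.-tuple 'I_N)
     stream_prob p u * \sum_z p z * f (pre ++ u) z.
Proof.
elim: t pre => [|t IH] pre; first by rewrite sum_tuple0 big_ord0 mulr0.
rewrite sum_tuple_cons big_ord_recl sum_tuple0 cats0 [stream_prob p _]big_nil mul1r.
under [X in _ + X]eq_bigr => k _ do rewrite (sum_tuple_cons (n := k)).
rewrite [in RHS]exchange_big -big_split /=; apply: eq_bigr => z _.
transitivity (p z * f pre z * \sum_(s : t.-tuple 'I_N) stream_prob p s +
  p z * \sum_(s : t.-tuple 'I_N) stream_prob p s * step_sum f (rcons pre z) s).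
  rewrite mulr_sumr mulr_sumr -big_split; apply: eq_bigr => s _ /=.
  by rewrite stream_prob_cons; ring.
rewrite sum_stream_prob mulr1 IH mulr_sumr; congr (_ + _).
apply: eq_bigr => k _; rewrite mulr_sumr; apply: eq_bigr => u _ /=.
by rewrite stream_prob_cons cat_rcons mulrA.
Qed.

End StreamSums.

Lemma sum_mul_indicator (R : pzSemiRingType) (I : finType) (F : I -> R) (P : pred I) :
  \sum_i F i * (P i)%:R = \sum_(i | P i) F i.
Proof. by rewrite [RHS]big_mkcond; apply: eq_bigr => i _; rewrite mulr_natr mulrb. Qed.

Definition havg (R : realType) (H : finType) (f : H -> R) : R :=
  #|H|%:R^-1 * \sum_h f h.

Section HashAverage.

Variables (R : realType) (H : finType).
Hypothesis H_gt0 : (0 < #|H|)%N.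
Implicit Types (f g : H -> R) (c : R).

Lemma sum_indicator (b : pred H) : \sum_h ((b h)%:R : R) = #|b|%:R.
Proof.
rewrite -sum1_card natr_sum [RHS]big_mkcond /=.
by apply: eq_bigr => h _; rewrite unfold_in; case: (b h).
Qed.

Lemma havg_ge0 f : (forall h, 0 <= f h) -> 0 <= havg f.
Proof. by move=> f_ge0; rewrite mulr_ge0 ?invr_ge0 ?ler0n ?sumr_ge0. Qed.

Lemma eq_havg f g : f =1 g -> havg f = havg g.
Proof. by move=> eq_fg; rewrite /havg (eq_bigr _ (fun h _ => eq_fg h)). Qed.

Lemma havg_le f g : (forall h, f h <= g h) -> havg f <= havg g.
Proof. by move=> le_fg; rewrite ler_wpM2l ?invr_ge0 ?ler0n ?ler_sum. Qed.

Lemma havg_cst c : havg (fun _ : H => c) = c.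
Proof.
by rewrite /havg sumr_const -[c *+ _]mulr_natl mulKf // pnatr_eq0 -lt0n.
Qed.

Lemma havgD f g : havg (fun h => f h + g h) = havg f + havg g.
Proof. by rewrite /havg big_split mulrDr. Qed.

Lemma havgZ c f : havg (fun h => c * f h) = c * havg f.
Proof. by rewrite /havg -mulr_sumr mulrCA. Qed.

Lemma havg_sum (I : Type) (r : seq I) (P : pred I) (F : I -> H -> R) :
  havg (fun h => \sum_(x <- r | P x) F x h) = \sum_(x <- r | P x) havg (F x).
Proof. by rewrite /havg exchange_big mulr_sumr. Qed.

Lemma havg_indicator_le1 (b : H -> bool) : havg (fun h => (b h)%:R) <= 1 :> R.
Proof.
by rewrite -[X in _ <= X](havg_cst 1); apply: havg_le => h; rewrite lern1 leq_b1.
Qed.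

Lemma havg_ffun_prod d (F : 'I_d -> H -> R) :
  havg (fun hs : {ffun 'I_d -> H} => \prod_r F r (hs r)) = \prod_r havg (F r).
Proof.
rewrite /havg card_ffun card_ord -(bigA_distr_bigA F) big_split /=.
by rewrite prodr_const card_ord natrX exprVn.
Qed.

End HashAverage.

Lemma havg_collision (R : realType) N w (H : finType) (hash : H -> 'I_N -> 'I_w) a b :
  pairwise_indep R hash -> (0 < w)%N -> a != b ->
  havg (fun h => ((hash h a == hash h b)%:R : R)) = w%:R^-1.
Proof.
move=> hash_pi w_gt0 ne_ab.
rewrite (@eq_havg _ _ _
  (fun h => \sum_(c : 'I_w) ((hash h a == c) && (hash h b == c))%:R)); last first.
  move=> h; rewrite (bigD1 (hash h a)) //= eqxx big1 ?addr0; first by rewrite eq_sym.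
  by move=> c /negbTE ne_c; rewrite eq_sym ne_c.
rewrite havg_sum.
under eq_bigr => c _ do rewrite /havg sum_indicator mulrC hash_pi //.
rewrite sumr_const card_ord -[_ *+ w]mulr_natr natrX div1r expr2 invfM -mulrA.
by rewrite mulVf ?mulr1 // pnatr_eq0 -lt0n.
Qed.

Lemma ler_exprn_add (R : realFieldType) (a q b : R) n :
  0 <= a <= 1 -> 0 <= q <= 1 -> 0 <= b -> a <= q + b ->
  a ^+ n <= q ^+ n + n%:R * b.
Proof.
move=> /andP [a_ge0 a_le1] /andP [q_ge0 q_le1] b_ge0 le_a_qb.
elim: n => [|n IH]; first by rewrite !expr0 mul0r addr0.
have qn_ge0 : 0 <= q ^+ n by exact: exprn_ge0.
have qn_le1 : q ^+ n <= 1 by exact: exprn_ile1.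
have an_ge0 : 0 <= a ^+ n by exact: exprn_ge0.
have h1 : a * a ^+ n <= a * (q ^+ n + n%:R * b) by exact: ler_wpM2l.
have h2 : a * (n%:R * b) <= n%:R * b by rewrite ler_piMl ?mulr_ge0.
have h3 : a * q ^+ n <= (q + b) * q ^+ n by exact: ler_wpM2r.
rewrite !exprS -natr1; nra.
Qed.

Lemma geometric_sum_le (R : realFieldType) (r : R) t :
  0 <= r < 1 -> \sum_(k < t) r ^+ k <= (1 - r)^-1.
Proof.
case/andP=> r_ge0 r_lt1; have r1_gt0 : 0 < 1 - r by rewrite subr_gt0.
rewrite -[_^-1]div1r ler_pdivlMr // mulrC -[1 - r]opprB mulNr -subrX1 opprB.
by have := exprn_ge0 t r_ge0; lra.
Qed.

Section ExponentialMoment.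

Variables (R : realType) (N : nat) (p : 'I_N -> R).
Hypothesis p_ge0 : forall j, 0 <= p j.
Hypothesis p_sum1 : \sum_(j < N) p j = 1.

Definition tilted_mean (th : R) (P Q : pred 'I_N) : R :=
  \sum_x p x * (th ^+ P x / th ^+ Q x).

Lemma tilted_mean_ge0 th P Q : 0 <= th -> 0 <= tilted_mean th P Q.
Proof. by move=> th_ge0; apply: sumr_ge0 => x _; rewrite mulr_ge0 ?divr_ge0 ?exprn_ge0. Qed.

(* Chernoff bound: [(count Q u <= count P u)%:R <= th ^+ (count P u - count Q u)]. *)
Lemma count_le_count_tail th P Q k : 1 <= th ->
  \sum_(u : k.-tuple 'I_N) stream_prob p u * (count Q u <= count P u)%:R
    <= tilted_mean th P Q ^+ k.
Proof.
move=> th_ge1; have th_gt0 : 0 < th := lt_le_trans ltr01 th_ge1.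
rewrite /tilted_mean -sum_tuple_prod; apply: ler_sum => u _.
rewrite /stream_prob big_split /= ler_wpM2l ?prodr_ge0 //.
have -> : \prod_(x <- u) (th ^+ P x / th ^+ Q x) = th ^+ count P u / th ^+ count Q u.
  elim: (tval u) => [|x s IH]; first by rewrite big_nil divr1.
  by rewrite big_cons IH /= !exprD invfM mulrACA.
case: leqP => [le_QP|_]; last by rewrite divr_ge0 ?exprn_ge0 ?ltW.
by rewrite ler_pdivlMr ?exprn_gt0 // mul1r ler_weXn2l.
Qed.

Lemma p_le1 j : p j <= 1.
Proof.
by rewrite -p_sum1 (bigD1 j) //= lerDl sumr_ge0.
Qed.

(* With [C] the mass of [P] and [th = 1 + (p j - C)], the tilted mean is
   [1 + (th - 1) C + (th^-1 - 1) p j], which is below 1 as soon as [C < 1]. *)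
Lemma tilted_mean_lt1 (P : pred 'I_N) j : ~~ P j -> \sum_(x | P x) p x < p j ->
  tilted_mean (1 + (p j - \sum_(x | P x) p x)) P (pred1 j) < 1.
Proof.
set C := \sum_(x | P x) p x => Pj_false lt_C_pj.
set e := p j - C; have e_gt0 : 0 < e by rewrite subr_gt0.
have th_neq0 : 1 + e != 0 by rewrite lt0r_neq0 // ltr_wpDl.
have C_ge0 : 0 <= C by exact: sumr_ge0.
have C_lt1 : C < 1 by exact: lt_le_trans lt_C_pj (p_le1 j).
have -> : tilted_mean (1 + e) P (pred1 j) = 1 + e * C - e / (1 + e) * p j.
  rewrite /tilted_mean (eq_bigr (fun x => p x + e * (p x * (P x)%:R)
      - e / (1 + e) * (p x * (x == j)%:R))) => [|x _]; last first.
    have [->|ne_xj] := eqVneq x j.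
      by rewrite (negbTE Pj_false) /= eqxx expr0 expr1; field.
    by rewrite /= (negbTE ne_xj); case: (P x); rewrite /= ?expr0 ?expr1 ?divr1; ring.
  by rewrite sumrB big_split /= -!mulr_sumr p_sum1 !sum_mul_indicator big_pred1_eq.
have pjE : p j = C + e by rewrite /e addrC subrK.
rewrite pjE -subr_gt0 -[X in 0 < X](mulfK th_neq0).
have -> : (1 - (1 + e * C - e / (1 + e) * (C + e))) * (1 + e) = e * e * (1 - C).
  by field.
rewrite divr_gt0 ?mulr_gt0 ?subr_gt0 //; lra.
Qed.

End ExponentialMoment.

Lemma card_ord_lt_neq N k (z : 'I_N) :
  (#|[pred l : 'I_N | (l < k)%N && (l != z)]| <= k)%N.
Proof.
rewrite cardE -(size_map val) -[k in (_ <= k)%N](size_iota 0).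
apply: uniq_leq_size; first by rewrite map_inj_uniq ?enum_uniq //; exact: val_inj.
by move=> x /mapP [l]; rewrite mem_enum inE => /andP [lt_lk _] ->; rewrite mem_iota.
Qed.

Section CoverProbability.

Variables (R : realType) (N w : nat) (H : finType) (hash : H -> 'I_N -> 'I_w).
Variables (p : 'I_N -> R) (i : 'I_N).
Hypothesis H_gt0 : (0 < #|H|)%N.
Hypothesis p_ge0 : forall j, 0 <= p j.
Hypothesis p_sum1 : \sum_(j < N) p j = 1.

Implicit Types (h : H) (z : 'I_N) (u : seq 'I_N).

Definition bucket_mass h z : R := \sum_(l | hash h l == hash h z) p l.

Definition cover_prob u z : R :=
  havg (fun h => (bucket_covers (hash h) u i z)%:R).

Definition heavy_prob z : R := havg (fun h => (p i <= bucket_mass h z)%R%:R).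

Definition light_cover_prob u z : R :=
  havg (fun h => ((bucket_mass h z < p i)%R && bucket_covers (hash h) u i z)%:R).

Lemma bucket_mass_ge h z l : hash h l == hash h z -> p l <= bucket_mass h z.
Proof. by move=> coll; rewrite /bucket_mass (bigD1 l) //= lerDl sumr_ge0. Qed.

Lemma cover_prob_exprn_le n u z :
  cover_prob u z ^+ n <= heavy_prob z ^+ n + n%:R * light_cover_prob u z.
Proof.
apply: ler_exprn_add; rewrite ?havg_indicator_le1 ?havg_ge0 //.
rewrite -havgD; apply: havg_le => h.
case: ltP => _ /=; first by rewrite lerDr.
by rewrite addr0 ler_nat leq_b1.
Qed.

(* Sum of the geometric series of Chernoff bounds on the probability that a
   bucket of [z] of mass below [p i] still covers [i] after [k] requests. *)
Definition light_return_bound z : R :=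
  havg (fun h => if bucket_mass h z < p i then
    (1 - tilted_mean p (1 + (p i - bucket_mass h z))
                       (fun y => hash h y == hash h z) (pred1 i))^-1 else 0).

Lemma light_tilted_mean_bounds h z : bucket_mass h z < p i ->
  0 <= tilted_mean p (1 + (p i - bucket_mass h z))
                     (fun y => hash h y == hash h z) (pred1 i) < 1.
Proof.
move=> light; rewrite tilted_mean_ge0 ?tilted_mean_lt1 //.
  by apply/negP => /bucket_mass_ge; rewrite leNgt light.
by rewrite ler_wpDr // subr_ge0 ltW.
Qed.

Lemma light_return_bound_ge0 z : 0 <= light_return_bound z.
Proof.
apply: havg_ge0 => h; case: ifP => // /light_tilted_mean_bounds /andP[_ lt1].
by rewrite invr_ge0 subr_ge0 ltW.
Qed.

Lemma sum_light_cover_prob_le z t :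
  \sum_(k < t) \sum_(u : k.-tuple 'I_N) stream_prob p u * light_cover_prob u z
    <= light_return_bound z.
Proof.
rewrite (eq_bigr (fun k : 'I_t => havg (fun h => \sum_(u : k.-tuple 'I_N) stream_prob p u *
    ((bucket_mass h z < p i)%R && bucket_covers (hash h) u i z)%:R))); last first.
  by move=> k _; rewrite havg_sum; apply: eq_bigr => u _; rewrite havgZ.
rewrite -havg_sum; apply: havg_le => h /=.
case: ifP => [light|_]; last first.
  by rewrite big1 // => k _; rewrite big1 // => u _; rewrite mulr0.
apply: le_trans (geometric_sum_le t (light_tilted_mean_bounds light)).
apply: ler_sum => k _; apply: le_trans (count_le_count_tail _ _ _ _ _) => //.
by rewrite lerDl subr_ge0 ltW.
Qed.

Hypothesis w_gt0 : (0 < w)%N.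
Hypothesis hash_pi : pairwise_indep R hash.

Lemma bucket_massE h z : bucket_mass h z = \sum_l p l * (hash h l == hash h z)%:R.
Proof. by rewrite sum_mul_indicator. Qed.

(* Union bound over the [k] most popular items, Markov bound for the rest. *)
Lemma heavy_indicator_le h z (k : nat) : 0 < p i - p z ->
  (p i <= bucket_mass h z)%R%:R <=
    \sum_(l : 'I_N | (l < k)%N && (l != z)) (hash h l == hash h z)%:R
    + (p i - p z)^-1 *
      \sum_(l : 'I_N | (k <= l)%N && (l != z)) p l * (hash h l == hash h z)%:R.
Proof.
move=> gap_gt0; set S := \sum_(l | _) _; set T := \sum_(l | _) _.
have S_ge0 : 0 <= S by exact: sumr_ge0.
have T_ge0 : 0 <= T by apply: sumr_ge0 => l _; rewrite mulr_ge0 ?ler0n.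
have Tx_ge0 : 0 <= (p i - p z)^-1 * T by rewrite mulr_ge0 // invr_ge0 ltW.
have [/existsP [l /and3P [lt_lk ne_lz coll]]|/existsPn none] :=
  boolP [exists l : 'I_N, [&& (l < k)%N, l != z & hash h l == hash h z]].
  have S_ge1 : 1 <= S by rewrite /S (bigD1 l) ?lt_lk ?ne_lz //= coll lerDl sumr_ge0.
  by rewrite (le_trans _ (ler_wpDr Tx_ge0 S_ge1)) // lern1 leq_b1.
have massE : bucket_mass h z = p z + T.
  rewrite bucket_massE (bigD1 z) //= eqxx mulr1 (bigID (fun l : 'I_N => (l < k)%N)) /=.
  rewrite big1 ?add0r => [|l /andP [ne_lz lt_lk]]; last first.
    by have := none l; rewrite ne_lz lt_lk /= => /negbTE ->; rewrite mulr0.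
  by congr (_ + _); apply: eq_bigl => l; rewrite -leqNgt andbC.
case: (boolP (p i <= bucket_mass h z)%R) => [heavy|_]; last by rewrite addr_ge0.
rewrite (le_trans _ (ler_wpDl S_ge0 (lexx _))) // mulrC ler_pdivlMr // mul1r.
by rewrite massE in heavy; rewrite lerBlDl.
Qed.

Lemma heavy_prob_le_A_term z (k : nat) : (k < w)%N -> 0 < p i - p z ->
  heavy_prob z <= A_term w p (p i - p z) k.
Proof.
move=> lt_kw gap_gt0; set x := p i - p z.
have w_gt0' : (0 : R) < w%:R by rewrite ltr0n.
have wk_gt0 : (0 : R) < (w - k)%:R by rewrite ltr0n subn_gt0.
apply: le_trans (havg_le (fun h => heavy_indicator_le h k gap_gt0)) _.
rewrite havgD havg_sum havgZ havg_sum /A_term [X in _ <= X]addrC; apply: lerD.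
  rewrite (eq_bigr (fun _ => w%:R^-1)) => [|l /andP [_ ne_lz]]; last first.
    exact: havg_collision hash_pi w_gt0 ne_lz.
  rewrite sumr_const -[_ *+ _]mulr_natl ler_pM2r ?invr_gt0 // ler_nat.
  exact: card_ord_lt_neq.
rewrite (eq_bigr (fun l => p l * w%:R^-1)) => [|l /andP [_ ne_lz]]; last first.
  by rewrite havgZ (havg_collision hash_pi w_gt0 ne_lz).
rewrite -mulr_suml mulrC invfM mulrA; apply: ler_wpM2r; first by rewrite invr_ge0 ltW.
apply: ler_pM; rewrite ?sumr_ge0 ?invr_ge0 ?ler0n //.
  rewrite [X in _ <= X](bigID (fun l : 'I_N => l != z)) /= lerDl.
  exact: sumr_ge0.
by rewrite lef_pV2 ?posrE // ler_nat leq_subr.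
Qed.

Lemma heavy_prob_exprn_le_gamma d z : heavy_prob z ^+ (d - 1) <= gamma d w p i z.
Proof.
have hp_ge0 : 0 <= heavy_prob z by exact: havg_ge0.
have hp_pow_le1 : heavy_prob z ^+ (d - 1) <= 1 by rewrite exprn_ile1 ?havg_indicator_le1.
rewrite /gamma /Acal; case: ifP => _ //; case: ifP => [gap_gt0|_]; last first.
  by rewrite expr1n le_min hp_pow_le1.
have le_hp_A : heavy_prob z <=
    \big[Num.min/A_term w p (p i - p z) 0]_(k < w) A_term w p (p i - p z) k.
  apply: (big_ind (fun y => heavy_prob z <= y)) => [|a b ha hb|k _].
  - exact: heavy_prob_le_A_term.
  - by rewrite le_min ha hb.
  - exact: heavy_prob_le_A_term.
by rewrite le_min hp_pow_le1 andbT lerXn2r ?nnegrE // (le_trans hp_ge0 le_hp_A).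
Qed.

End CoverProbability.

Section ExpectedError.

Variables (R : realType) (N d w : nat) (H : finType) (hash : H -> 'I_N -> 'I_w).
Variables (p : 'I_N -> R) (i : 'I_N) (r0 : 'I_d).
Hypothesis d_gt0 : (0 < d)%N.
Hypothesis H_gt0 : (0 < #|H|)%N.
Hypothesis w_gt0 : (0 < w)%N.
Hypothesis hash_pi : pairwise_indep R hash.
Hypothesis p_ge0 : forall j, 0 <= p j.
Hypothesis p_sum1 : \sum_(j < N) p j = 1.

Definition bad_step_prob (u : seq 'I_N) (z : 'I_N) : R :=
  havg (fun hs : {ffun 'I_d -> H} => (cu_bad_step (fun r => hash (hs r)) r0 i u z)%:R).

(* Drop the covering condition in row [r0]: what remains is a product of
   independent events, one per row. *)
Lemma bad_step_prob_le u z :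
  bad_step_prob u z <= (z != i)%:R / w%:R * cover_prob R hash i u z ^+ (d - 1).
Proof.
have [->|ne_zi] := eqVneq z i.
  by rewrite !mul0r /bad_step_prob /havg big1 ?mulr0 // => hs _; rewrite /cu_bad_step eqxx.
pose G r h : R := if r == r0 then (hash h z == hash h i)%:R
                  else (bucket_covers (hash h) u i z)%:R.
apply: le_trans (havg_le (g := fun hs : {ffun 'I_d -> H} => \prod_r G r (hs r)) _) _.
  move=> hs; case/boolP: (cu_bad_step _ _ _ _ _) => [/and3P [_ coll /forallP cov]|_].
    by rewrite big1 // => r _; rewrite /G; case: eqP => [->|_]; rewrite ?coll ?cov.
  by apply: prodr_ge0 => r _; rewrite /G; case: eqP.
rewrite havg_ffun_prod /= mul1r (bigD1 r0) //= {1}/G eqxx.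
rewrite havg_collision // (eq_bigr (fun=> cover_prob R hash i u z)) => [|r /negbTE ne_r].
  by rewrite prodr_const cardC1 card_ord subn1.
by apply: eq_havg => h; rewrite /G ne_r.
Qed.

Lemma sum_bad_step_prob_le z t :
  \sum_(k < t) \sum_(u : k.-tuple 'I_N) stream_prob p u * bad_step_prob u z <=
    t%:R * ((z != i)%:R / w%:R * heavy_prob hash p i z ^+ (d - 1))
    + (z != i)%:R / w%:R * ((d - 1)%:R * light_return_bound hash p i z).
Proof.
pose c : R := (z != i)%:R / w%:R; rewrite -/c.
have c_ge0 : 0 <= c by rewrite mulr_ge0 ?invr_ge0 ?ler0n.
apply: (@le_trans _ _ (\sum_(k < t) \sum_(u : k.-tuple 'I_N) stream_prob p u *
  (c * heavy_prob hash p i z ^+ (d - 1) +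
   c * (d - 1)%:R * light_cover_prob hash p i u z))).
  apply: ler_sum => k _; apply: ler_sum => u _.
  rewrite ler_wpM2l ?stream_prob_ge0 // (le_trans (bad_step_prob_le u z)) //.
  by rewrite -/c -mulrA -mulrDr ler_wpM2l ?cover_prob_exprn_le.
rewrite (eq_bigr (fun k : 'I_t => c * heavy_prob hash p i z ^+ (d - 1) + c * (d - 1)%:R *
  \sum_(u : k.-tuple 'I_N) stream_prob p u * light_cover_prob hash p i u z)) => [|k _].
  rewrite big_split /= sumr_const card_ord -[_ *+ t]mulr_natl -mulr_sumr -mulrA lerD2l.
  by apply: ler_wpM2l => //; apply: ler_wpM2l; rewrite ?ler0n ?sum_light_cover_prob_le.
under eq_bigr do rewrite mulrDr.
rewrite big_split /= -mulr_suml sum_stream_prob // mul1r mulr_sumr.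
by congr (_ + _); apply: eq_bigr => u _; rewrite mulrCA.
Qed.

Lemma expected_rel_err_le t :
  expected_rel_err d hash p i t <=
    t%:R^-1 * \sum_z p z * \sum_(k < t) \sum_(u : k.-tuple 'I_N)
      stream_prob p u * bad_step_prob u z.
Proof.
have -> : expected_rel_err d hash p i t = havg (fun hs : {ffun 'I_d -> H} =>
    \sum_(s : t.-tuple 'I_N)
      stream_prob p s * (cu_error R (fun r => hash (hs r)) s i / t%:R)).
  by rewrite /expected_rel_err /havg card_ffun card_ord.
apply: le_trans (havg_le (g := fun hs : {ffun 'I_d -> H} =>
    t%:R^-1 * \sum_(s : t.-tuple 'I_N)
      stream_prob p s * cu_bad_steps R (fun r => hash (hs r)) r0 i [::] s) _) _.
  move=> hs; rewrite mulr_sumr; apply: ler_sum => s _.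
  rewrite [X in _ <= X]mulrCA; apply: ler_wpM2l; first exact: stream_prob_ge0.
  rewrite mulrC; apply: ler_wpM2l; first by rewrite invr_ge0 ler0n.
  exact: cu_error_le_bad_steps.
rewrite havgZ; apply: ler_wpM2l; first by rewrite invr_ge0 ler0n.
rewrite (eq_havg (fun hs => expect_step_sum p_sum1 _ t [::])) havg_sum.
under eq_bigr do rewrite havg_sum.
under eq_bigr do under eq_bigr do rewrite havgZ havg_sum.
under [X in _ <= X]eq_bigr do rewrite mulr_sumr.
under [X in _ <= X]eq_bigr do under eq_bigr do rewrite mulr_sumr.
rewrite [X in _ <= X]exchange_big.
under [X in _ <= X]eq_bigr do rewrite exchange_big.
apply: ler_sum => k _; apply: ler_sum => u _; rewrite mulr_sumr.
by apply: ler_sum => z _; rewrite havgZ cat0s mulrCA.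
Qed.

End ExpectedError.

Theorem theorem1 (R : realType) (N d w : nat) (H : finType)
    (hash : H -> 'I_N -> 'I_w) (p : 'I_N -> R) :
  (0 < d)%N -> (0 < w)%N -> (0 < #|H|)%N ->
  pairwise_indep R hash ->
  (forall j, 0 <= p j) -> \sum_(j < N) p j = 1 ->
  (forall j k : 'I_N, (j <= k)%N -> p k <= p j) ->
  forall i : 'I_N, exists B : R, 0 <= B /\
    forall t : nat, (0 < t)%N ->
      expected_rel_err d hash p i t
        <= w%:R^-1 * (\sum_(j < N | j != i) p j * gamma d w p i j) + B / t%:R.
Proof.
move=> d_gt0 w_gt0 H_gt0 hash_pi p_ge0 p_sum1 _ i.
pose r0 : 'I_d := Ordinal d_gt0.
pose c (z : 'I_N) : R := (z != i)%:R / w%:R.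
have c_ge0 z : 0 <= c z by rewrite mulr_ge0 ?invr_ge0 ?ler0n.
exists (\sum_z p z * (c z * ((d - 1)%:R * light_return_bound hash p i z))).
split=> [|t t_gt0].
  apply: sumr_ge0 => z _; apply: mulr_ge0 (p_ge0 z) (mulr_ge0 (c_ge0 z) _).
  by rewrite mulr_ge0 ?ler0n ?light_return_bound_ge0.
have t_pos : (0 : R) < t%:R by rewrite ltr0n.
have tinv_ge0 : (0 : R) <= t%:R^-1 by rewrite invr_ge0 ltW.
apply: le_trans (expected_rel_err_le hash i r0 d_gt0 p_ge0 p_sum1 t) _.
apply: le_trans (ler_wpM2l tinv_ge0 (ler_sum _ (fun z _ =>
  ler_wpM2l (p_ge0 z) (sum_bad_step_prob_le i r0 H_gt0 w_gt0 hash_pi p_ge0 p_sum1 z t)))) _.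
under eq_bigr do rewrite mulrDr mulrCA.
rewrite big_split -mulr_sumr mulrDr mulKf ?gt_eqF // mulrC lerD2r.
rewrite mulr_sumr [X in _ <= X]big_mkcond /=; apply: ler_sum => z _.
rewrite /c; case: eqVneq => [->|_] /=; first by rewrite !mul0r mulr0.
by rewrite mul1r mulrCA ler_wpM2l ?invr_ge0 ?ler0n // ler_wpM2l // heavy_prob_exprn_le_gamma.
Qed.
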